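(* If $B$ is an algebra that is integral over a Jacobson ring $A$, then $B$ is Jacobson.
   Context: All rings are commutative with identity. The setting is constructive mathematics: no law of excluded middle and no Zorn's lemma. For a ring $A$ and a subset $U\subseteq A$, $\langle U\rangle_A$ denotes the ideal generated by $U$. Define $\mathrm{Nil}_A U:=\{a\in A:\exists n\ge 0,\ a^n\in\langle U\rangle_A\}$ and $\mathrm{Jac}_A U:=\{a\in A:\forall b\in A,\ 1\in\langle U\cup\{1-ab\}\rangle_A\}$. A ring $A$ is called Jacobson if every ideal $I$ of $A$ satisfies $\mathrm{Jac}_A I\subseteq \mathrm{Nil}_A I$. *)

From mathcomp Require Import all_boot all_algebra.
Set Implicit Arguments. Unset Strict Implicit. Unset Printing Implicit Defensive.
Import GRing.Theory.
Local Open Scope ring_scope.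

(* Rings: commutative with identity; the zero ring is allowed (comPzRingType).
   Subsets of a ring are predicates R -> Prop. *)

Definition ideal_gen (R : comPzRingType) (U : R -> Prop) : R -> Prop :=
  fun x => exists (n : nat) (r u : 'I_n -> R),
      (forall i, U (u i)) /\ x = \sum_(i < n) r i * u i.

Definition is_ideal (R : comPzRingType) (I : R -> Prop) : Prop :=
  [/\ I 0, (forall x y, I x -> I y -> I (x + y)) & (forall r x, I x -> I (r * x))].

Definition Nil (R : comPzRingType) (U : R -> Prop) : R -> Prop :=
  fun a => exists n : nat, ideal_gen U (a ^+ n).

Definition Jac (R : comPzRingType) (U : R -> Prop) : R -> Prop :=
  fun a => forall b : R, ideal_gen (fun x => U x \/ x = 1 - a * b) 1.

Definition jacobson_ring (R : comPzRingType) : Prop :=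
  forall I : R -> Prop, is_ideal I -> forall a, Jac I a -> Nil I a.

Definition integral_over (A B : comPzRingType) (f : {rmorphism A -> B}) : Prop :=
  forall b : B, exists (n : nat) (c : 'I_n -> A),
      b ^+ n + \sum_(i < n) f (c i) * b ^+ i = 0.

From mathcomp Require Import all_boot all_algebra.
From mathcomp Require Import ring.
Set Implicit Arguments. Unset Strict Implicit. Unset Printing Implicit Defensive.
Import GRing.Theory.
Local Open Scope ring_scope.

(* Let b be in Jac J and let b^n + f(c_{n-1}) b^{n-1} + ... + f(c_0) lie in J;
   we show by induction on n that a power of b lies in J.  Write the relation
   as f(c_0) + b g.  As b is in Jac J, 1 + b g f(a) is invertible modulo J for
   every a, and modulo J it equals f(1 - c_0 a); integrality of its
   inverse forces 1 - c_0 a to be invertible modulo the contraction f^-1(J).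
   So c_0 lies in the Jacobson radical of f^-1(J), hence some c_0^k lies in
   f^-1(J) as A is Jacobson, and then (b g)^k lies in J.  Applying the
   induction hypothesis to b, which is still in the Jacobson radical of the
   larger ideal J + g B, and the relation g of degree n - 1, gives
   b^m = j + g y with j in J; hence b^((m+1) k) = (b j + b g y)^k lies in J. *)

Definition integral (A B : comPzRingType) (f : {rmorphism A -> B}) (z : B) :=
  exists (n : nat) (c : 'I_n -> A), z ^+ n + \sum_(i < n) f (c i) * z ^+ i = 0.

Definition preim_ideal (A B : comPzRingType) (f : A -> B) (J : B -> Prop) :=
  fun a => J (f a).

Definition ideal_adjoin (R : comPzRingType) (J : R -> Prop) (g : R) :=
  fun x => exists j y, J j /\ x = j + g * y.

Definition eqmod (R : comPzRingType) (J : R -> Prop) (x y : R) := J (x - y).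

Lemma ideal_gen_mem (R : comPzRingType) (U : R -> Prop) x : U x -> ideal_gen U x.
Proof.
move=> Ux; exists 1%N, (fun=> 1), (fun=> x); split => //.
by rewrite big_ord1 mul1r.
Qed.

Lemma ideal_gen_sub (R : comPzRingType) (U V : R -> Prop) x :
  (forall y, U y -> V y) -> ideal_gen U x -> ideal_gen V x.
Proof. by move=> UV [n [r [u [Uu ->]]]]; exists n, r, u; split => // i; apply: UV. Qed.

Lemma ideal_gen_adjoin (R : comPzRingType) (U : R -> Prop) e x z :
  U x -> ideal_gen (fun y => U y \/ y = e) (x + e * z).
Proof.
move=> Ux; exists 2%N, (fun i : 'I_2 => if val i == 0%N then 1 else z),
  (fun i : 'I_2 => if val i == 0%N then x else e); split.
  by case=> [[|k] lt_k2] /=; [left | right].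
by rewrite !big_ord_recl big_ord0 /= mul1r addr0 mulrC.
Qed.

Lemma Jac_sub (R : comPzRingType) (U V : R -> Prop) b :
  (forall x, U x -> V x) -> Jac U b -> Jac V b.
Proof.
move=> UV Ub a; apply: ideal_gen_sub (Ub a) => x [/UV | ->]; by [left | right].
Qed.

Lemma monic_sum_recl (R : comPzRingType) n (a : 'I_n.+1 -> R) (b : R) :
  b ^+ n.+1 + \sum_(i < n.+1) a i * b ^+ i =
  a ord0 + b * (b ^+ n + \sum_(i < n) a (lift ord0 i) * b ^+ i).
Proof.
rewrite big_ord_recl expr0 mulr1 mulrDr mulr_sumr addrCA -exprS.
by congr (_ + (_ + _)); apply: eq_bigr => i _; rewrite /= exprS mulrCA.
Qed.

Section Ideal.
Variables (R : comPzRingType) (J : R -> Prop).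
Hypothesis idealJ : is_ideal J.

Lemma ideal0 : J 0. Proof. by case: idealJ. Qed.
Lemma idealD x y : J x -> J y -> J (x + y). Proof. by case: idealJ => _ + _; apply. Qed.
Lemma idealMl r x : J x -> J (r * x). Proof. by case: idealJ => _ _; apply. Qed.
Lemma idealMr r x : J x -> J (x * r). Proof. by rewrite mulrC; apply: idealMl. Qed.
Lemma idealN x : J x -> J (- x). Proof. by rewrite -mulN1r; apply: idealMl. Qed.

Lemma ideal_sum n (F : 'I_n -> R) : (forall i, J (F i)) -> J (\sum_(i < n) F i).
Proof. by move=> JF; apply: big_ind => //; [exact: ideal0 | exact: idealD]. Qed.

Lemma ideal_genE x : ideal_gen J x -> J x.
Proof. by case=> n [r [u [Ju ->]]]; apply: ideal_sum => i; apply: idealMl. Qed.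

Lemma ideal_genP e x :
  ideal_gen (fun y => J y \/ y = e) x -> exists j z, J j /\ x = j + e * z.
Proof.
case=> n [r [u [Ju ->]]]; elim: n r u Ju => [|n IHn] r u Ju.
  by exists 0, 0; rewrite big_ord0 mulr0 addr0; split => //; apply: ideal0.
rewrite big_ord_recr /=.
have [j [z [Jj ->]]] := IHn (r \o widen_ord (leqnSn n)) (u \o widen_ord (leqnSn n))
  (fun i => Ju _).
case: (Ju ord_max) => [Jum | ->].
  exists (j + r ord_max * u ord_max), z; split; last by rewrite addrAC.
  by apply: idealD => //; apply: idealMl.
by exists j, (z + r ord_max); split => //; rewrite mulrDr addrA [e * r _]mulrC.
Qed.

Lemma ideal_adjoin_ideal g : is_ideal (ideal_adjoin J g).
Proof.
split.
- by exists 0, 0; rewrite mulr0 addr0; split => //; apply: ideal0.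
- move=> _ _ [j1 [y1 [Jj1 ->]]] [j2 [y2 [Jj2 ->]]].
  exists (j1 + j2), (y1 + y2); rewrite mulrDr addrACA; split => //.
  exact: idealD.
- move=> r _ [j [y [Jj ->]]]; exists (r * j), (r * y).
  by rewrite mulrDr mulrCA; split => //; apply: idealMl.
Qed.

Lemma ideal_adjoin_sub g x : J x -> ideal_adjoin J g x.
Proof. by exists x, 0; rewrite mulr0 addr0. Qed.

Lemma ideal_adjoin_gen g : ideal_adjoin J g g.
Proof. by exists 0, 1; rewrite mulr1 add0r; split => //; apply: ideal0. Qed.

Lemma eqmod_refl x : eqmod J x x.
Proof. by rewrite /eqmod subrr; apply: ideal0. Qed.

Lemma eqmod_trans x y z : eqmod J x y -> eqmod J y z -> eqmod J x z.
Proof. by move=> Jxy /(idealD Jxy); rewrite /eqmod addrA subrK. Qed.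

Lemma eqmodD x1 x2 y1 y2 :
  eqmod J x1 y1 -> eqmod J x2 y2 -> eqmod J (x1 + x2) (y1 + y2).
Proof. by move=> J1 J2; rewrite /eqmod opprD addrACA; apply: idealD. Qed.

Lemma eqmodM x1 x2 y1 y2 :
  eqmod J x1 y1 -> eqmod J x2 y2 -> eqmod J (x1 * x2) (y1 * y2).
Proof.
move=> J1 J2; rewrite /eqmod.
have -> : x1 * x2 - y1 * y2 = x1 * (x2 - y2) + (x1 - y1) * y2 by ring.
by apply: idealD; [apply: idealMl | apply: idealMr].
Qed.

Lemma eqmodX x y k : eqmod J x y -> eqmod J (x ^+ k) (y ^+ k).
Proof.
move=> Jxy; elim: k => [|k IHk]; first by rewrite !expr0; apply: eqmod_refl.
by rewrite !exprS; apply: eqmodM.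
Qed.

Lemma eqmod_sum n (F G : 'I_n -> R) :
  (forall i, eqmod J (F i) (G i)) -> eqmod J (\sum_(i < n) F i) (\sum_(i < n) G i).
Proof. by move=> JFG; rewrite /eqmod -sumrB; apply: ideal_sum. Qed.

Lemma eqmod_mem x y : eqmod J x y -> J y -> J x.
Proof. by move=> Jxy Jy; rewrite -(subrK y x); apply: idealD. Qed.

End Ideal.

Section Contraction.
Variables (A B : comPzRingType) (f : {rmorphism A -> B}) (J : B -> Prop).
Hypothesis idealJ : is_ideal J.

Lemma preim_ideal_ideal : is_ideal (preim_ideal f J).
Proof.
split; rewrite /preim_ideal.
- by rewrite rmorph0; apply: ideal0.
- by move=> x y Jx Jy; rewrite rmorphD; apply: idealD.
- by move=> r x Jx; rewrite rmorphM; apply: idealMl.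
Qed.

(* Multiplying z^m + sum f(d_i) z^i = 0 by f(u)^m gives
   (f(u) z)^m + sum f(d_i u^(m-i)) (f(u) z)^i = 0; as f(u) z = 1 modulo J,
   this puts f(1 + sum d_i u^(m-i)) in J, and 1 + sum d_i u^(m-i) = 1 mod u. *)
Lemma ideal_gen_preim_unit u z : integral f z -> eqmod J (f u * z) 1 ->
  ideal_gen (fun x => preim_ideal f J x \/ x = u) 1.
Proof.
move=> [m [d zd]] uz1.
set t := \sum_(i < m) d i * u ^+ (m - i).
set s := \sum_(i < m) d i * u ^+ (m - i.+1).
have ts : t = u * s.
  by rewrite mulr_sumr; apply: eq_bigr => i _; rewrite mulrCA -exprS subnSK.
have scale_rel : f u ^+ m * (z ^+ m + \sum_(i < m) f (d i) * z ^+ i) =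
    (f u * z) ^+ m + \sum_(i < m) f (d i) * f u ^+ (m - i) * (f u * z) ^+ i.
  rewrite mulrDr exprMn mulr_sumr; congr (_ + _); apply: eq_bigr => i _.
  by rewrite -{1}(subnK (ltnW (ltn_ord i))) exprD exprMn; ring.
have : eqmod J (f u ^+ m * (z ^+ m + \sum_(i < m) f (d i) * z ^+ i)) (f (1 + t)).
  rewrite scale_rel rmorphD rmorph1 rmorph_sum.
  apply: eqmodD => //; first by rewrite -(expr1n _ m); apply: eqmodX.
  apply: eqmod_sum => // i; rewrite rmorphM rmorphXn -[X in eqmod _ _ X]mulr1.
  apply: eqmodM => //; first exact: eqmod_refl.
  by rewrite -(expr1n _ i); apply: eqmodX.
rewrite zd mulr0 /eqmod sub0r => /(idealN idealJ); rewrite opprK => Jt.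
have -> : (1 : A) = (1 + t) + u * (- s) by rewrite mulrN -ts addrK.
exact: ideal_gen_adjoin.
Qed.

Lemma Jac_preim_const b g c : integral_over f -> Jac J b -> J (f c + b * g) ->
  Jac (preim_ideal f J) c.
Proof.
move=> intB Jb Jcbg a.
have [j [z [Jj jz1]]] := ideal_genP idealJ (Jb (- (g * f a))).
apply: (ideal_gen_preim_unit (intB z)).
apply: (eqmod_trans idealJ (y := (1 - b * - (g * f a)) * z)).
  apply: eqmodM => //; last exact: eqmod_refl.
  rewrite /eqmod rmorphB rmorph1 rmorphM.
  have -> : 1 - f c * f a - (1 - b * - (g * f a)) = - ((f c + b * g) * f a) by ring.
  by apply: idealN => //; apply: idealMr.
have -> : (1 - b * - (g * f a)) * z = 1 - j by rewrite [in RHS]jz1 addrAC subrr add0r.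
by rewrite /eqmod addrAC subrr add0r; apply: idealN.
Qed.

End Contraction.

Lemma Jac_integral_rel_pow (A B : comPzRingType) (f : {rmorphism A -> B}) b n :
  jacobson_ring A -> integral_over f ->
  forall (J : B -> Prop) (c : 'I_n -> A), is_ideal J -> Jac J b ->
  J (b ^+ n + \sum_(i < n) f (c i) * b ^+ i) -> exists m, J (b ^+ m).
Proof.
move=> jacA intB; elim: n => [|n IHn] J c idealJ Jb.
  by rewrite big_ord0 addr0 => J1; exists 0%N.
rewrite monic_sum_recl; set g := b ^+ n + _ => Jcbg.
have idealI := preim_ideal_ideal f idealJ.
have [k Jck] : exists k, J (f (c ord0) ^+ k).
  have [k ck] := jacA _ idealI _ (Jac_preim_const idealJ intB Jb Jcbg).
  by exists k; rewrite -rmorphXn; apply: (ideal_genE idealI ck).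
have Jbgk : J ((b * g) ^+ k).
  apply: (eqmod_mem idealJ (y := (- f (c ord0)) ^+ k)); last first.
    by rewrite exprNn; apply: idealMl.
  by apply: eqmodX => //; rewrite /eqmod opprK addrC.
have [m [j [y [Jj bm]]]] := IHn _ (fun i => c (lift ord0 i))
  (ideal_adjoin_ideal idealJ g) (Jac_sub (@ideal_adjoin_sub _ J g) Jb)
  (ideal_adjoin_gen idealJ g).
exists (m.+1 * k)%N; rewrite exprM.
apply: (eqmod_mem idealJ (y := (b * g * y) ^+ k)); last first.
  by rewrite exprMn; apply: idealMr.
by apply: eqmodX => //; rewrite /eqmod exprS bm mulrDr mulrA addrK; apply: idealMl.
Qed.

Theorem mainTheorem10 (A B : comPzRingType) (f : {rmorphism A -> B}) :
  jacobson_ring A -> integral_over f -> jacobson_ring B.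
Proof.
move=> jacA intB I idealI b Ib.
have [n [c bc]] := intB b.
have Ibc : I (b ^+ n + \sum_(i < n) f (c i) * b ^+ i) by rewrite bc; apply: ideal0.
have [m Ibm] := Jac_integral_rel_pow jacA intB idealI Ib Ibc.
by exists m; apply: ideal_gen_mem.
Qed.
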